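(* Let $L,M$ be distributive lattices and $T:\mathrm{FBL}\langle L\rangle\to\mathrm{FBL}\langle M\rangle$ a (linear) lattice homomorphism, and define $\Phi_T:M^*\to\mathbb R^L$ by $\Phi_T(y^* )(x)=(T\delta_x)(y^* )$. Then: (1) $\Phi_T$ is continuous when $M^*$ and $\mathbb R^L$ carry the product topologies; (2) if $T$ has dense range and $\|T\|\le1$, then $\Phi_T$ is injective; (3) if $T$ is an isometric lattice isomorphism onto $\mathrm{FBL}\langle M\rangle$, then $\Phi_T$ is a bijection from $M^*$ onto $L^*$ and $\Phi_{T^{-1}}=(\Phi_T)^{-1}$; (4) for all $y_1^*,\dots,y_m^*\in M^*$, $\sup_{x\in L}\sum_{i=1}^m|\Phi_T(y_i^* )(x)|\le\|T\|\sup_{y\in M}\sum_{i=1}^m|y_i^*(y)|$.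
   Context: For a distributive lattice $L$, $L^*$ is the set of all lattice homomorphisms $x^*:L\to[-1,1]$, a subset of $\mathbb R^L$ with the product topology; for $x\in L$, $\delta_x:L^*\to\mathbb R$ is $\delta_x(x^* )=x^*(x)$. A function $f:L^*\to\mathbb R$ is positively homogeneous if $f(\lambda x^* )=\lambda f(x^* )$ whenever $\lambda\ge0$ and $\lambda x^*\in L^*$; for such $f$, $\|f\|=\sup\{\sum_{i=1}^m|f(x_i^* )|: m\in\mathbb N,\ x_i^*\in L^*,\ \sup_{x\in L}\sum_{i=1}^m|x_i^*(x)|\le1\}$. $\mathrm{FBL}\langle L\rangle$ is the norm closure of the vector sublattice generated by $\{\delta_x:x\in L\}$ inside the Banach lattice of positively homogeneous functions on $L^*$ with finite norm, with pointwise order and operations; its elements are continuous functions on $L^*$. *)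

From HB Require Import structures.
From mathcomp Require Import all_boot all_order all_algebra.
From mathcomp Require Import all_classical all_reals all_analysis.
Set Implicit Arguments. Unset Strict Implicit. Unset Printing Implicit Defensive.
Import Order.TTheory GRing.Theory Num.Theory.
Import numFieldNormedType.Exports.
Local Open Scope classical_set_scope.
Local Open Scope ring_scope.

Section FBL.
Variable R : realType.

Definition Lstar d (L : distrLatticeType d) : set (L -> R) :=
  [set xs | (forall x, -1 <= xs x <= 1) /\
            (forall x y, xs (Order.meet x y) = Num.min (xs x) (xs y)) /\
            (forall x y, xs (Order.join x y) = Num.max (xs x) (xs y))].

(* Functions on Lstar are represented as functions on R^L that vanish off Lstar. *)
Definition delta d (L : distrLatticeType d) (x : L) : (L -> R) -> R :=
  fun xs => if `[< Lstar xs >] then xs x else 0.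

Definition pos_hom d (L : distrLatticeType d) (f : (L -> R) -> R) : Prop :=
  forall (lam : R) (xs : L -> R), 0 <= lam -> Lstar xs ->
    Lstar (fun x => lam * xs x) -> f (fun x => lam * xs x) = lam * f xs.

Definition fbl_norm d (L : distrLatticeType d) (f : (L -> R) -> R) : \bar R :=
  ereal_sup [set e | exists (m : nat) (xs : 'I_m -> L -> R),
     [/\ (forall i, Lstar (xs i)),
         (forall x : L, \sum_(i < m) `|xs i x| <= 1) &
         e = (\sum_(i < m) `|f (xs i)|)%:E]].

Definition ambient d (L : distrLatticeType d) (f : (L -> R) -> R) : Prop :=
  [/\ (forall xs, ~ Lstar xs -> f xs = 0), pos_hom f & (fbl_norm f < +oo)%E].

Inductive gen d (L : distrLatticeType d) : ((L -> R) -> R) -> Prop :=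
  | gen_delta x : gen (delta x)
  | gen_zero : gen (fun _ => 0)
  | gen_add f g : gen f -> gen g -> gen (fun xs => f xs + g xs)
  | gen_scale (a : R) f : gen f -> gen (fun xs => a * f xs)
  | gen_max f g : gen f -> gen g -> gen (fun xs => Num.max (f xs) (g xs))
  | gen_min f g : gen f -> gen g -> gen (fun xs => Num.min (f xs) (g xs)).

Definition FBL d (L : distrLatticeType d) (f : (L -> R) -> R) : Prop :=
  ambient f /\ forall e : R, 0 < e -> exists g, gen g /\
    (fbl_norm (fun xs => (f xs - g xs)%R) <= e%:E)%E.

Section Ops.
Context d (L : distrLatticeType d) d' (M : distrLatticeType d').
Implicit Type T : ((L -> R) -> R) -> ((M -> R) -> R).

Definition lattice_hom T : Prop :=
  [/\ (forall f, FBL f -> FBL (T f)),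
      (forall a b f g, FBL f -> FBL g ->
         T (fun xs => a * f xs + b * g xs) = (fun ys => a * T f ys + b * T g ys)),
      (forall f g, FBL f -> FBL g ->
         T (fun xs => Num.max (f xs) (g xs)) = (fun ys => Num.max (T f ys) (T g ys))) &
      (forall f g, FBL f -> FBL g ->
         T (fun xs => Num.min (f xs) (g xs)) = (fun ys => Num.min (T f ys) (T g ys)))].

Definition op_norm T : \bar R :=
  ereal_sup [set fbl_norm (T f) | f in [set f | FBL f /\ (fbl_norm f <= 1%:E)%E]].

Definition dense_range T : Prop :=
  forall g, FBL g -> forall e : R, 0 < e ->
    exists f, FBL f /\ (fbl_norm (fun ys => (T f ys - g ys)%R) < e%:E)%E.

Definition isometric_iso T : Prop :=
  [/\ (forall f g, FBL f -> FBL g -> T f = T g -> f = g),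
      (forall g, FBL g -> exists2 f, FBL f & T f = g) &
      (forall f, FBL f -> fbl_norm (T f) = fbl_norm f)].

Definition Phi T : (M -> R) -> (L -> R) := fun ys x => T (delta x) ys.

End Ops.
End FBL.

From HB Require Import structures.
From mathcomp Require Import all_boot all_order all_algebra.
From mathcomp Require Import all_classical all_reals all_analysis.
From mathcomp Require Import ring lra.

(* Every element g of FBL<L> is an FBL-norm limit of lattice-linear expressions in
   the delta_x, and the FBL norm dominates the sup norm on L^*.  Hence g is
   continuous on L^* (which gives (1) coordinatewise).  When ||T|| <= 1, Phi_T maps
   M^* into L^* and g (Phi_T y) = (T g) y for every y in M^*: both sides are lattice
   homomorphisms in g agreeing on the delta_x, hence on the generated sublattice, and
   both are 1-Lipschitz for the FBL norm.  Injectivity (2) follows by testing this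
   identity on approximants T f of delta_y; (3) by applying it to T and to its
   inverse; and (4) by rescaling y_1, ..., y_m into the unit ball of the FBL norm and
   using the positive homogeneity of T delta_x. *)

Set Implicit Arguments. Unset Strict Implicit. Unset Printing Implicit Defensive.
Import Order.TTheory GRing.Theory Num.Theory.
Import numFieldNormedType.Exports.
Local Open Scope classical_set_scope.
Local Open Scope ring_scope.

Section Lipschitz2.
Context {R : realType}.
Implicit Types (op : R -> R -> R) (a b : R).

Definition lipschitz2 op a b :=
  forall u v u' v', `|op u v - op u' v'| <= a * `|u - u'| + b * `|v - v'|.

Definition pos_homogeneous2 op :=
  forall lam u v, 0 <= lam -> op (lam * u) (lam * v) = lam * op u v.

Lemma pos_homogeneous2_00 op : pos_homogeneous2 op -> op 0 0 = 0.
Proof. by move=> hop; have := hop 0 0 0 (lexx 0); rewrite !mul0r. Qed.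

Lemma lipschitz2_le op a b : pos_homogeneous2 op -> lipschitz2 op a b ->
  forall u v, `|op u v| <= a * `|u| + b * `|v|.
Proof.
by move=> /pos_homogeneous2_00 op00 lop u v; have := lop u v 0 0; rewrite op00 !subr0.
Qed.

Lemma lipschitz2_add : lipschitz2 +%R 1 1.
Proof.
move=> u v u' v'; rewrite !mul1r.
have -> : u + v - (u' + v') = (u - u') + (v - v') by ring.
exact: ler_normD.
Qed.

Lemma lipschitz2_scale a : lipschitz2 (fun u _ => a * u) `|a| 0.
Proof. by move=> u v u' v'; rewrite -mulrBr normrM mul0r addr0. Qed.

Lemma lipschitz2_max : lipschitz2 Num.max 1 1.
Proof.
move=> a b c e; rewrite !mul1r.
have := ler_norm (a - c); have := ler_norm (c - a); have := ler_norm (b - e).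
have := ler_norm (e - b); rewrite [`|c - a|]distrC [`|e - b|]distrC.
set A := `|a - c|; set B := `|b - e| => ? ? ? ?.
rewrite ler_norml !maxEle; case: ifP => ?; case: ifP => ?; apply/andP; split; lra.
Qed.

Lemma lipschitz2_min : lipschitz2 Num.min 1 1.
Proof.
move=> u v u' v'; have := lipschitz2_max (- u) (- v) (- u') (- v').
by rewrite -!oppr_min -!opprD !normrN.
Qed.

Lemma pos_homogeneous2_add : pos_homogeneous2 +%R.
Proof. by move=> lam u v _; rewrite mulrDr. Qed.

Lemma pos_homogeneous2_scale a : pos_homogeneous2 (fun u _ => a * u).
Proof. by move=> lam u v _; rewrite mulrCA. Qed.

Lemma pos_homogeneous2_max : pos_homogeneous2 Num.max.
Proof. by move=> lam u v /maxr_pMr. Qed.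

Lemma pos_homogeneous2_min : pos_homogeneous2 Num.min.
Proof. by move=> lam u v /minr_pMr. Qed.

End Lipschitz2.

Section FBLNorm.
Context {R : realType} {d : Order.disp_t} {L : distrLatticeType d}.
Implicit Types (f g h : (L -> R) -> R) (xs : L -> R) (x y : L).

Lemma fbl_norm_ge0 f : (0 <= fbl_norm f)%E.
Proof.
apply: ereal_sup_ubound; exists 0%N, (fun _ _ => 0); split.
- by case.
- by move=> x; rewrite big_ord0.
- by rewrite big_ord0.
Qed.

Lemma Lstar_norm_le1 xs x : Lstar xs -> `|xs x| <= 1.
Proof. by case=> xs_bound _; rewrite ler_norml xs_bound. Qed.

Lemma normr_le_fbl_norm f xs : Lstar xs -> (`|f xs|%:E <= fbl_norm f)%E.
Proof.
move=> Lxs; apply: ereal_sup_ubound; exists 1%N, (fun _ => xs); split => //.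
- by move=> x; rewrite big_ord1; exact: Lstar_norm_le1.
- by rewrite big_ord1.
Qed.

Lemma fbl_norm_le f (c : R) :
  (forall m (xs : 'I_m -> L -> R), (forall i, Lstar (xs i)) ->
     (forall x, \sum_(i < m) `|xs i x| <= 1) -> \sum_(i < m) `|f (xs i)| <= c) ->
  (fbl_norm f <= c%:E)%E.
Proof. by move=> fc; apply: ge_ereal_sup => _ [m [xs [Lxs xs1 ->]]]; rewrite lee_fin fc. Qed.

Lemma sum_le_fbl_norm f m (xs : 'I_m -> L -> R) : (forall i, Lstar (xs i)) ->
  (forall x, \sum_(i < m) `|xs i x| <= 1) ->
  ((\sum_(i < m) `|f (xs i)|)%:E <= fbl_norm f)%E.
Proof. by move=> Lxs xs1; apply: ereal_sup_ubound; exists m, xs. Qed.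

Lemma fbl_norm0 : @fbl_norm R _ L (fun _ => 0) = 0%E.
Proof.
apply/le_anti; rewrite fbl_norm_ge0 andbT; apply: fbl_norm_le => m xs _ _.
by rewrite big1 // => i _; rewrite normr0.
Qed.

Lemma fbl_norm_delta_le1 x : (fbl_norm (@delta R _ _ x) <= 1%:E)%E.
Proof.
apply: fbl_norm_le => m xs Lxs xs1; rewrite (eq_bigr (fun i => `|xs i x|)) //.
by move=> i _; rewrite /delta asboolT.
Qed.

Lemma fbl_norm_le_dominated f g h (a b U V : R) : 0 <= a -> 0 <= b ->
  (fbl_norm f <= U%:E)%E -> (fbl_norm g <= V%:E)%E ->
  (forall xs, Lstar xs -> `|h xs| <= a * `|f xs| + b * `|g xs|) ->
  (fbl_norm h <= (a * U + b * V)%:E)%E.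
Proof.
move=> a0 b0 fU gV hfg; apply: fbl_norm_le => m xs Lxs xs1.
have sumU : \sum_(i < m) `|f (xs i)| <= U.
  by rewrite -lee_fin (le_trans _ fU) // sum_le_fbl_norm.
have sumV : \sum_(i < m) `|g (xs i)| <= V.
  by rewrite -lee_fin (le_trans _ gV) // sum_le_fbl_norm.
apply: le_trans (_ : \sum_(i < m) (a * `|f (xs i)| + b * `|g (xs i)|) <= _).
  by apply: ler_sum => i _; exact: hfg.
by rewrite big_split /= -!mulr_sumr lerD // ler_wpM2l.
Qed.

Lemma fbl_norm_fin f : (fbl_norm f < +oo)%E -> exists U : R, (fbl_norm f <= U%:E)%E.
Proof.
by move=> ltfoo; exists (fine (fbl_norm f)); rewrite fineK // ge0_fin_numE // fbl_norm_ge0.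
Qed.

Lemma delta_meet x y : @delta R _ _ (Order.meet x y) = fun xs => Num.min (delta x xs) (delta y xs).
Proof.
apply: funext => xs; rewrite /delta.
by case: asboolP => [[_ [-> _]] | _] //; rewrite minxx.
Qed.

Lemma delta_join x y : @delta R _ _ (Order.join x y) = fun xs => Num.max (delta x xs) (delta y xs).
Proof.
apply: funext => xs; rewrite /delta.
by case: asboolP => [[_ [_ ->]] | _] //; rewrite maxxx.
Qed.

End FBLNorm.

Section FBLClosure.
Context {R : realType} {d : Order.disp_t} {L : distrLatticeType d}.
Implicit Types (f g h : (L -> R) -> R) (xs : L -> R) (op : R -> R -> R).

Lemma ambient_delta (x : L) : ambient (@delta R _ _ x).
Proof.
split.
- by move=> xs Lxs; rewrite /delta asboolF.
- by move=> lam xs _ Lxs Llxs; rewrite /delta !asboolT.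
- exact: le_lt_trans (fbl_norm_delta_le1 x) (ltry _).
Qed.

Lemma ambient0 : ambient (fun _ : L -> R => 0 : R).
Proof. by split => // [lam xs *|]; [rewrite mulr0 | rewrite fbl_norm0 ltry]. Qed.

Lemma ambient_op2 op (a b : R) f g : 0 <= a -> 0 <= b ->
  lipschitz2 op a b -> pos_homogeneous2 op -> ambient f -> ambient g ->
  ambient (fun xs => op (f xs) (g xs)).
Proof.
move=> a0 b0 lop hop [f0 hf /fbl_norm_fin [U fU]] [g0 hg /fbl_norm_fin [V gV]].
split.
- by move=> xs Lxs; rewrite f0 // g0 // pos_homogeneous2_00.
- by move=> lam xs lam0 Lxs Llxs; rewrite hf // hg // hop.
- apply: le_lt_trans (ltry (a * U + b * V)).
  by apply: fbl_norm_le_dominated fU gV _ => // xs _; exact: lipschitz2_le.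
Qed.

Lemma FBL_of_gen h : ambient h -> gen h -> FBL h.
Proof.
move=> hh gh; split => // e e0; exists h; split => //.
rewrite (_ : (fun xs => h xs - h xs) = fun _ => 0).
  by rewrite fbl_norm0 lee_fin ltW.
by apply: funext => xs; rewrite subrr.
Qed.

Lemma FBL_op2 op (a b : R) f g : 0 <= a -> 0 <= b ->
  lipschitz2 op a b -> pos_homogeneous2 op ->
  (forall f' g', gen f' -> gen g' -> gen (fun xs => op (f' xs) (g' xs))) ->
  FBL f -> FBL g -> FBL (fun xs => op (f xs) (g xs)).
Proof.
move=> a0 b0 lop hop gen_op [af approx_f] [ag approx_g].
split; first exact: (ambient_op2 a0 b0 lop hop af ag).
move=> e e0; have c0 : 0 < a + b + 1 by rewrite ltr_wpDl // addr_ge0.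
have ec0 : 0 < e / (a + b + 1) by rewrite divr_gt0.
have [f' [gen_f' near_f]] := approx_f _ ec0.
have [g' [gen_g' near_g]] := approx_g _ ec0.
exists (fun xs => op (f' xs) (g' xs)); split; first exact: gen_op.
apply: le_trans (fbl_norm_le_dominated a0 b0 near_f near_g _) _.
  by move=> xs _; exact: lop.
rewrite lee_fin -mulrDl mulrA ler_pdivrMr // mulrDr mulr1 mulrC lerDl; exact: ltW.
Qed.

Lemma FBL_add f g : FBL f -> FBL g -> FBL (fun xs => f xs + g xs).
Proof.
exact: (FBL_op2 ler01 ler01 lipschitz2_add pos_homogeneous2_add (@gen_add _ _ _)).
Qed.

Lemma FBL_scale (a : R) f : FBL f -> FBL (fun xs => a * f xs).
Proof.
move=> Ff; apply: (FBL_op2 (normr_ge0 a) (lexx 0) (lipschitz2_scale a)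
  (pos_homogeneous2_scale a) _ Ff Ff) => f' g' gf' _; exact: gen_scale.
Qed.

Lemma FBL_max f g : FBL f -> FBL g -> FBL (fun xs => Num.max (f xs) (g xs)).
Proof.
exact: (FBL_op2 ler01 ler01 lipschitz2_max pos_homogeneous2_max (@gen_max _ _ _)).
Qed.

Lemma FBL_min f g : FBL f -> FBL g -> FBL (fun xs => Num.min (f xs) (g xs)).
Proof.
exact: (FBL_op2 ler01 ler01 lipschitz2_min pos_homogeneous2_min (@gen_min _ _ _)).
Qed.

Lemma FBL_delta (x : L) : FBL (@delta R _ _ x).
Proof. exact: FBL_of_gen (ambient_delta x) (gen_delta _ x). Qed.

Lemma FBL0 : FBL (fun _ : L -> R => 0 : R).
Proof. exact: FBL_of_gen ambient0 (gen_zero _ _). Qed.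

Lemma FBL_gen h : gen h -> FBL h.
Proof.
elim=> [x||f g _ + _|a f _|f g _ + _|f g _ + _].
- exact: FBL_delta.
- exact: FBL0.
- exact: FBL_add.
- exact: FBL_scale.
- exact: FBL_max.
- exact: FBL_min.
Qed.

Lemma FBL_comb (a b : R) f g : FBL f -> FBL g -> FBL (fun xs => a * f xs + b * g xs).
Proof. by move=> Ff Fg; apply: FBL_add; exact: FBL_scale. Qed.

Lemma FBL_sub f g : FBL f -> FBL g -> FBL (fun xs => f xs - g xs).
Proof.
move=> Ff Fg; have := FBL_comb 1 (-1) Ff Fg.
by congr FBL; apply: funext => xs; rewrite mul1r mulN1r.
Qed.

End FBLClosure.

Lemma ptws_cvg_coord (U : choiceType) (V : uniformType) (F : set_system (U -> V))
    (f : U -> V) :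
  Filter F -> (forall t, (fun g => g t) @ F --> f t) -> {ptws, F --> f}.
Proof.
move=> FF coord_cvg; rewrite cvg_sup => t; have := coord_cvg t.
rewrite cvg_image; last by rewrite eqEsubset; split=> v // _; exists (cst v).
move=> + W /= => /[apply]; rewrite nbhs_simpl => FW; exists (@^~ t @^-1` W) => //.
by rewrite eqEsubset; split => [g [? + <-//]|v Wv]; exists (fun _ => v).
Qed.

Section Continuity.
Context {R : realType} {d : Order.disp_t} {M : distrLatticeType d}.
Implicit Types (ys : M -> R) (g h : (M -> R) -> R).

Lemma gen_cvg_within_Lstar h ys : Lstar ys -> gen h ->
  h @ within (@Lstar R _ M) (nbhs (ys : {ptws M -> R})) --> h ys.
Proof.
(* instance inference does not find this filter on the product topology *)
move=> Lys; have ys_filter : Filter (nbhs (ys : {ptws M -> R})) by exact: nbhs_filter.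
elim=> [y||f g _ IHf _ IHg|a f _ IHf|f g _ IHf _ IHg|f g _ IHf _ IHg].
- have delta_proj : \forall zs \near within (@Lstar R _ M) (nbhs (ys : {ptws M -> R})),
      zs y = delta y zs.
    by rewrite near_withinE; apply: nearW => zs Lzs; rewrite /delta asboolT.
  rewrite {2}/delta asboolT //; apply: cvg_trans (near_eq_cvg delta_proj) _.
  apply: cvg_within_filter; exact: (@proj_continuous M (fun _ => R) y ys).
- exact: cvg_cst.
- exact: cvgD.
- by apply: cvgM => //; exact: cvg_cst.
- by apply: continuous2_cvg IHf IHg; exact: (@max_continuous _ R (f ys, g ys)).
- by apply: continuous2_cvg IHf IHg; exact: (@min_continuous _ R (f ys, g ys)).
Qed.

Lemma FBL_cvg_within_Lstar g ys : Lstar ys -> FBL g ->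
  g @ within (@Lstar R _ M) (nbhs (ys : {ptws M -> R})) --> g ys.
Proof.
move=> Lys Fg; have ys_filter : Filter (nbhs (ys : {ptws M -> R})) by exact: nbhs_filter.
apply/cvgrPdist_lt => e e0; have e3 : 0 < e / 3 by rewrite divr_gt0.
have [h [gh near_h]] := Fg.2 _ e3.
have /cvgrPdist_lt/(_ _ e3) h_cvg := gen_cvg_within_Lstar Lys gh.
near=> zs.
have Lzs : Lstar zs by near: zs; exact: near_withinT.
have h_close : `|h ys - h zs| < e / 3 by near: zs; exact: h_cvg.
have := le_trans (normr_le_fbl_norm _ Lzs) near_h.
have := le_trans (normr_le_fbl_norm _ Lys) near_h.
rewrite !lee_fin /= => near_ys near_zs.
have -> : g ys - g zs = (g ys - h ys) + (h ys - h zs) - (g zs - h zs) by ring.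
apply: le_lt_trans (ler_normB _ _) _.
by apply: le_lt_trans (lerD (ler_normD _ _) (lexx _)) _; lra.
Unshelve. all: by end_near.
Qed.

End Continuity.

Lemma Phi_continuous {R : realType} {d : Order.disp_t} {L : distrLatticeType d}
    {d' : Order.disp_t} {M : distrLatticeType d'}
    (T : ((L -> R) -> R) -> ((M -> R) -> R)) : lattice_hom T ->
  {within (@Lstar R _ M : set {ptws M -> R}),
    continuous (Phi T : {ptws M -> R} -> {ptws L -> R})}.
Proof.
case=> FT _ _ _; apply/subspace_continuousP => ys Lys.
apply: ptws_cvg_coord => x; exact: FBL_cvg_within_Lstar Lys (FT _ (FBL_delta x)).
Qed.

Lemma eq_of_dist_le (R : realFieldType) (u v : R) :
  (forall e, 0 < e -> `|u - v| <= e) -> u = v.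
Proof.
move=> uv; apply/eqP; rewrite -subr_eq0 -normr_le0.
by apply/ler_addgt0Pr => e e0; rewrite add0r uv.
Qed.

Section LatticeHom.
Context {R : realType} {d : Order.disp_t} {L : distrLatticeType d}
  {d' : Order.disp_t} {M : distrLatticeType d'}.
Variable U : ((L -> R) -> R) -> ((M -> R) -> R).
Implicit Types (f g h : (L -> R) -> R) (xs : L -> R) (zs : M -> R).

Lemma fbl_norm_le_op_norm f : FBL f -> (fbl_norm f <= 1%:E)%E ->
  (fbl_norm (U f) <= op_norm U)%E.
Proof. by move=> Ff f1; apply: ereal_sup_ubound; exists f. Qed.

Hypothesis hU : lattice_hom U.

Lemma lattice_hom0 : U (fun _ => 0) = fun _ => 0.
Proof.
case: hU => _ hlin _ _; have := hlin 0 0 _ _ FBL0 FBL0.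
rewrite (_ : (fun _ => _) = fun _ => 0) => [->|]; apply: funext => ? /=.
  by rewrite !mul0r addr0.
by rewrite !mul0r addr0.
Qed.

Lemma lattice_homD f g : FBL f -> FBL g ->
  U (fun xs => f xs + g xs) = fun zs => U f zs + U g zs.
Proof.
case: hU => _ hlin _ _ Ff Fg; have := hlin 1 1 _ _ Ff Fg.
rewrite (_ : (fun xs => _) = fun xs => f xs + g xs) => [->|].
  by apply: funext => zs; rewrite !mul1r.
by apply: funext => xs; rewrite !mul1r.
Qed.

Lemma lattice_homZ (a : R) f : FBL f -> U (fun xs => a * f xs) = fun zs => a * U f zs.
Proof.
case: hU => _ hlin _ _ Ff; have := hlin a 0 _ _ Ff Ff.
rewrite (_ : (fun xs => _) = fun xs => a * f xs) => [->|].
  by apply: funext => zs; rewrite mul0r addr0.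
by apply: funext => xs; rewrite mul0r addr0.
Qed.

Lemma lattice_homB f g : FBL f -> FBL g ->
  U (fun xs => f xs - g xs) = fun zs => U f zs - U g zs.
Proof.
case: hU => _ hlin _ _ Ff Fg; have := hlin 1 (-1) _ _ Ff Fg.
rewrite (_ : (fun xs => _) = fun xs => f xs - g xs) => [->|].
  by apply: funext => zs; rewrite mul1r mulN1r.
by apply: funext => xs; rewrite mul1r mulN1r.
Qed.

Lemma lattice_hom_max f g : FBL f -> FBL g ->
  U (fun xs => Num.max (f xs) (g xs)) = fun zs => Num.max (U f zs) (U g zs).
Proof. by case: hU => _ _ hmax _; exact: hmax. Qed.

Lemma lattice_hom_min f g : FBL f -> FBL g ->
  U (fun xs => Num.min (f xs) (g xs)) = fun zs => Num.min (U f zs) (U g zs).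
Proof. by case: hU => _ _ _ hmin; exact: hmin. Qed.

Lemma lattice_hom_norm_le (c r : R) f zs : (op_norm U <= c%:E)%E -> FBL f -> 0 < r ->
  (fbl_norm f <= r%:E)%E -> Lstar zs -> `|U f zs| <= c * r.
Proof.
move=> Uc Ff r0 fr Lzs; have r'0 : 0 <= r^-1 by rewrite invr_ge0 ltW.
have rf1 : (fbl_norm (fun xs => (r^-1 * f xs)%R) <= 1%:E)%E.
  apply: le_trans (fbl_norm_le_dominated r'0 (lexx 0) fr fr _) _.
    by move=> xs _; rewrite mul0r addr0 normrM ger0_norm.
  by rewrite mul0r addr0 mulVf ?gt_eqF.
have := le_trans (normr_le_fbl_norm _ Lzs)
  (le_trans (fbl_norm_le_op_norm (FBL_scale r^-1 Ff) rf1) Uc).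
rewrite lattice_homZ // lee_fin normrM ger0_norm //.
by rewrite -ler_pdivrMr // mulrC.
Qed.

Lemma Phi_Lstar zs : (op_norm U <= 1%:E)%E -> Lstar zs -> Lstar (Phi U zs).
Proof.
move=> U1 Lzs; split; [|split].
- move=> x; rewrite -ler_norml -[1 in X in _ <= X](mulr1 1).
  exact: lattice_hom_norm_le U1 (FBL_delta x) ltr01 (fbl_norm_delta_le1 x) Lzs.
- by move=> x y; rewrite /Phi delta_meet lattice_hom_min //; exact: FBL_delta.
- by move=> x y; rewrite /Phi delta_join lattice_hom_max //; exact: FBL_delta.
Qed.

Lemma Phi_evalE_gen zs h : Lstar zs -> Lstar (Phi U zs) -> gen h -> h (Phi U zs) = U h zs.
Proof.
move=> Lzs; set xs := Phi U zs => Lxs.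
elim=> [x||f g gf IHf gg IHg|a f gf IHf|f g gf IHf gg IHg|f g gf IHf gg IHg] /=.
- by rewrite /delta asboolT.
- by rewrite lattice_hom0.
- by rewrite IHf IHg lattice_homD //; exact: FBL_gen.
- by rewrite IHf lattice_homZ //; exact: FBL_gen.
- by rewrite IHf IHg lattice_hom_max //; exact: FBL_gen.
- by rewrite IHf IHg lattice_hom_min //; exact: FBL_gen.
Qed.

Lemma Phi_evalE zs g : (op_norm U <= 1%:E)%E -> Lstar zs -> FBL g ->
  g (Phi U zs) = U g zs.
Proof.
move=> U1 Lzs Fg; have LPhi := Phi_Lstar U1 Lzs.
apply: eq_of_dist_le => e e0; have e2 : 0 < e / 2 by rewrite divr_gt0.
have [h [gh near_h]] := Fg.2 _ e2; have Fh := FBL_gen gh.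
have near_Phi := le_trans (normr_le_fbl_norm _ LPhi) near_h.
rewrite lee_fin /= (Phi_evalE_gen Lzs LPhi gh) in near_Phi.
have := lattice_hom_norm_le U1 (FBL_sub Fg Fh) e2 near_h Lzs.
rewrite lattice_homB //= mul1r => near_U.
have -> : g (Phi U zs) - U g zs = (g (Phi U zs) - U h zs) - (U g zs - U h zs) by ring.
by apply: le_trans (ler_normB _ _) _; lra.
Qed.

Lemma Phi_injective : dense_range U -> (op_norm U <= 1%:E)%E ->
  {in @Lstar R _ M &, injective (Phi U)}.
Proof.
move=> dU U1 z1 z2 /set_mem Lz1 /set_mem Lz2 Phi12; apply: funext => y.
have U12 f : FBL f -> U f z1 = U f z2.
  by move=> Ff; rewrite -!Phi_evalE // Phi12.
apply: eq_of_dist_le => e e0; have e2 : 0 < e / 2 by rewrite divr_gt0.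
have [f [Ff near_f]] := dU _ (FBL_delta y) _ e2.
have near1 := le_trans (normr_le_fbl_norm _ Lz1) (ltW near_f).
have near2 := le_trans (normr_le_fbl_norm _ Lz2) (ltW near_f).
rewrite lee_fin /= /delta asboolT // U12 // in near1.
rewrite lee_fin /= /delta asboolT // in near2.
have -> : z1 y - z2 y = (U f z2 - z2 y) - (U f z2 - z1 y) by ring.
by apply: le_trans (ler_normB _ _) _; lra.
Qed.

End LatticeHom.

Lemma op_norm_iso_le1 {R : realType} {d : Order.disp_t} {L : distrLatticeType d}
    {d' : Order.disp_t} {M : distrLatticeType d'}
    (T : ((L -> R) -> R) -> ((M -> R) -> R)) :
  isometric_iso T -> (op_norm T <= 1%:E)%E.
Proof. by case=> _ _ isoT; apply: ge_ereal_sup => _ [f [Ff f1] <-]; rewrite isoT. Qed.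

Lemma isometric_iso_inverse {R : realType} {d : Order.disp_t} {L : distrLatticeType d}
    {d' : Order.disp_t} {M : distrLatticeType d'}
    (T : ((L -> R) -> R) -> ((M -> R) -> R)) :
  lattice_hom T -> isometric_iso T ->
  exists S : ((M -> R) -> R) -> ((L -> R) -> R),
    (forall f, FBL f -> FBL (S (T f)) /\ S (T f) = f) /\
    (forall g, FBL g -> FBL (S g) /\ T (S g) = g).
Proof.
case=> FT _ _ _ [injT surjT _].
have /choice [S TS] : forall g, exists f, FBL g -> FBL f /\ T f = g.
  move=> g; have [/surjT [f Ff Tf]|nFg] := pselect (FBL g); first by exists f.
  by exists (fun _ => 0) => /nFg.
exists S; split => // f Ff; have [FSTf TSTf] := TS _ (FT _ Ff).
by split => //; apply: injT.
Qed.

Lemma Phi_cancel {R : realType} {d : Order.disp_t} {L : distrLatticeType d}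
    {d' : Order.disp_t} {M : distrLatticeType d'} (U : ((L -> R) -> R) -> ((M -> R) -> R))
    (V : ((M -> R) -> R) -> ((L -> R) -> R)) :
  lattice_hom U -> (op_norm U <= 1%:E)%E ->
  (forall g, FBL g -> FBL (V g) /\ U (V g) = g) ->
  forall zs, Lstar zs -> Phi V (Phi U zs) = zs.
Proof.
move=> hU U1 UV zs Lzs; apply: funext => y; have [FVy UVy] := UV _ (FBL_delta y).
by rewrite /Phi Phi_evalE // UVy /delta asboolT.
Qed.

Section Inverse.
Context {R : realType} {d : Order.disp_t} {L : distrLatticeType d}
  {d' : Order.disp_t} {M : distrLatticeType d'}.

Variables (T : ((L -> R) -> R) -> ((M -> R) -> R))
  (S : ((M -> R) -> R) -> ((L -> R) -> R)).
Hypotheses (hT : lattice_hom T) (isoT : isometric_iso T).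
Hypothesis ST : forall f, FBL f -> FBL (S (T f)) /\ S (T f) = f.
Hypothesis TS : forall g, FBL g -> FBL (S g) /\ T (S g) = g.

Lemma lattice_hom_inverse : lattice_hom S.
Proof.
case: hT => _ linT maxT minT; split.
- by move=> g /TS [].
- move=> a b g1 g2 /TS [Fg1 <-] /TS [Fg2 <-].
  by rewrite -linT // (ST (FBL_comb a b Fg1 Fg2)).2 !(ST _).2.
- move=> g1 g2 /TS [Fg1 <-] /TS [Fg2 <-].
  by rewrite -maxT // (ST (FBL_max Fg1 Fg2)).2 !(ST _).2.
- move=> g1 g2 /TS [Fg1 <-] /TS [Fg2 <-].
  by rewrite -minT // (ST (FBL_min Fg1 Fg2)).2 !(ST _).2.
Qed.

Lemma op_norm_inverse_le1 : (op_norm S <= 1%:E)%E.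
Proof.
case: isoT => _ _ normT; apply: ge_ereal_sup => _ [g [Fg g1] <-].
by have [FSg TSg] := TS Fg; rewrite -normT // TSg.
Qed.

Lemma Phi_inverse : (forall ys, Lstar ys -> Phi S (Phi T ys) = ys) /\
  (forall xs, Lstar xs -> Phi T (Phi S xs) = xs).
Proof.
split; first exact: Phi_cancel hT (op_norm_iso_le1 isoT) TS.
apply: (Phi_cancel lattice_hom_inverse op_norm_inverse_le1) => f Ff.
by case: hT => FT _ _ _; split; [exact: FT | exact: (ST Ff).2].
Qed.

End Inverse.

Lemma Phi_set_bij {R : realType} {d : Order.disp_t} {L : distrLatticeType d}
    {d' : Order.disp_t} {M : distrLatticeType d'}
    (T : ((L -> R) -> R) -> ((M -> R) -> R)) :
  lattice_hom T -> isometric_iso T -> set_bij (@Lstar R _ M) (@Lstar R _ L) (Phi T).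
Proof.
move=> hT isoT; have [S [ST TS]] := isometric_iso_inverse hT isoT.
have [PhiK PhiKV] := Phi_inverse hT isoT ST TS; split.
- by move=> ys Lys; exact: Phi_Lstar hT ys (op_norm_iso_le1 isoT) Lys.
- by move=> y1 y2 /set_mem L1 /set_mem L2 E; rewrite -(PhiK _ L1) E PhiK.
- move=> xs Lxs; exists (Phi S xs); last exact: PhiKV.
  exact: Phi_Lstar (lattice_hom_inverse hT ST TS) xs (op_norm_inverse_le1 isoT TS) Lxs.
Qed.

Section PosHom.
Context {R : realType} {d : Order.disp_t} {L : distrLatticeType d}.
Implicit Types (f : (L -> R) -> R) (xs : L -> R).

Lemma Lstar_scale xs (lam : R) : Lstar xs -> 0 <= lam ->
  (forall x, lam * `|xs x| <= 1) -> Lstar (fun x => lam * xs x).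
Proof.
move=> [_ [meet join]] lam0 bound; split; [|split].
- by move=> x; rewrite -ler_norml normrM ger0_norm.
- by move=> x y; rewrite meet minr_pMr.
- by move=> x y; rewrite join maxr_pMr.
Qed.

Lemma pos_hom_eq0_of_empty f : (L -> False) -> pos_hom f -> forall xs, f xs = 0.
Proof.
move=> noL hf xs; have Lxs : Lstar xs by split; [|split] => x; case: (noL x).
have xs0 : (fun x => 0 * xs x) = xs by apply: funext => x; case: (noL x).
by have := hf 0 xs (lexx 0) Lxs; rewrite xs0 mul0r; apply.
Qed.

Lemma pos_hom_sum_le f m (xs : 'I_m -> L -> R) (r : R) : pos_hom f ->
  (forall i, Lstar (xs i)) -> 0 <= r -> (forall x, \sum_(i < m) `|xs i x| <= r) ->
  ((\sum_(i < m) `|f (xs i)|)%:E <= r%:E * fbl_norm f)%E.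
Proof.
move=> hf Lxs r0 xs_r.
have xs_le i x : `|xs i x| <= r.
  apply: le_trans (xs_r x); rewrite (bigD1 i) //= lerDl.
  by apply: sumr_ge0 => j _.
move: r0; rewrite le0r => /orP[/eqP r0 | r0].
  rewrite r0 mul0e lee_fin big1 // => i _.
  have xs0 : (fun x => 0 * xs i x) = xs i.
    by apply: funext => x; rewrite mul0r; apply/esym/eqP; rewrite -normr_le0 -r0.
  by have := hf 0 (xs i) (lexx 0) (Lxs i); rewrite xs0 mul0r => /(_ (Lxs i)) ->; rewrite normr0.
have r'0 : 0 <= r^-1 by rewrite invr_ge0 ltW.
pose ys i x := r^-1 * xs i x.
have Lys i : Lstar (ys i).
  apply: Lstar_scale (Lxs i) r'0 _ => x.
  by rewrite mulrC ler_pdivrMr // mul1r.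
have xs_ys i : f (xs i) = r * f (ys i).
  have := hf r (ys i) (ltW r0) (Lys i).
  rewrite (_ : (fun x => r * ys i x) = xs i) => [/(_ (Lxs i))//|].
  by apply: funext => x; rewrite /ys mulrA mulfV ?gt_eqF // mul1r.
rewrite (eq_bigr (fun i => r * `|f (ys i)|)); last first.
  by move=> i _; rewrite xs_ys normrM gtr0_norm.
rewrite -mulr_sumr EFinM lee_wpmul2l ?lee_fin ?(ltW r0) //.
apply: sum_le_fbl_norm Lys _ => x.
rewrite (eq_bigr (fun i => r^-1 * `|xs i x|)) => [|i _]; last first.
  by rewrite /ys normrM ger0_norm.
by rewrite -mulr_sumr mulrC ler_pdivrMr // mul1r.
Qed.

End PosHom.

Section SumBound.
Context {R : realType} {d : Order.disp_t} {L : distrLatticeType d}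
  {d' : Order.disp_t} {M : distrLatticeType d'}.
Variable T : ((L -> R) -> R) -> ((M -> R) -> R).
Hypothesis hT : lattice_hom T.

Lemma Phi_sum_le x m (ys : 'I_m -> M -> R) (r : R) : (forall i, Lstar (ys i)) ->
  0 <= r -> (forall y, \sum_(i < m) `|ys i y| <= r) ->
  ((\sum_(i < m) `|Phi T (ys i) x|)%:E <= op_norm T * r%:E)%E.
Proof.
case: hT => FT _ _ _ Lys r0 ys_r; have [[_ hTx _] _] := FT _ (FBL_delta x).
rewrite muleC; apply: le_trans (pos_hom_sum_le hTx Lys r0 ys_r) _.
apply: lee_wpmul2l; first by rewrite lee_fin.
exact: fbl_norm_le_op_norm (FBL_delta x) (fbl_norm_delta_le1 x).
Qed.

Lemma op_norm_eq0_of_empty : (M -> False) -> op_norm T = 0%E.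
Proof.
case: hT => FT _ _ _ noM; apply/le_anti/andP; split.
- apply: ge_ereal_sup => _ [f [Ff _] <-].
  have [[_ hTf _] _] := FT _ Ff.
  rewrite (_ : T f = fun _ => 0) ?fbl_norm0 //.
  by apply: funext; exact: pos_hom_eq0_of_empty noM hTf.
- apply: le_trans (fbl_norm_ge0 (T (fun _ => 0))) _.
  by apply: fbl_norm_le_op_norm FBL0 _; rewrite fbl_norm0 lee_fin.
Qed.

Lemma Phi_sup_sum_le m (ys : 'I_m -> M -> R) : (forall i, Lstar (ys i)) ->
  (ereal_sup [set (\sum_(i < m) `|Phi T (ys i) x|)%:E | x in [set: L]]
   <= op_norm T * ereal_sup [set (\sum_(i < m) `|ys i y|)%:E | y in [set: M]])%E.
Proof.
move=> Lys; have [[y0 _]|noM] := pselect (exists y : M, True); last first.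
  (* the supremum over the empty M is -oo, so the bound needs op_norm T = 0 *)
  have {}noM : M -> False by move=> y; apply: noM; exists y.
  rewrite op_norm_eq0_of_empty // mul0e; apply: ge_ereal_sup => _ [x _ <-].
  case: hT => FT _ _ _; have [[_ hTx _] _] := FT _ (FBL_delta x).
  by rewrite lee_fin big1 // => i _; rewrite /Phi (pos_hom_eq0_of_empty noM hTx) normr0.
set s := (X in (_ <= _ * X)%E).
have s_ub y : ((\sum_(i < m) `|ys i y|)%:E <= s)%E by apply: ereal_sup_ubound; exists y.
have s_le_m : (s <= m%:R%:E)%E.
  apply: ge_ereal_sup => _ [y _ <-]; rewrite lee_fin.
  apply: le_trans (_ : \sum_(i < m) (1 : R) <= _); last by rewrite sumr_const card_ord.
  by apply: ler_sum => i _; exact: Lstar_norm_le1.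
have s_ge0 : (0 <= s)%E by apply: le_trans (s_ub y0); rewrite lee_fin sumr_ge0.
have s_fin : s \is a fin_num by rewrite ge0_fin_numE // (le_lt_trans s_le_m) ?ltry.
rewrite -(fineK s_fin); apply: ge_ereal_sup => _ [x _ <-].
by apply: Phi_sum_le => // [|y]; rewrite -lee_fin fineK.
Qed.

End SumBound.

Unset Implicit Arguments.

Theorem mainTheorem18 (R : realType) d (L : distrLatticeType d)
    d' (M : distrLatticeType d')
    (T : ((L -> R) -> R) -> ((M -> R) -> R)) :
  lattice_hom T ->
  [/\ (* (1) *)
      {within (@Lstar R _ M : set {ptws M -> R}), continuous (Phi T : {ptws M -> R} -> {ptws L -> R})},
      (* (2) *)
      (dense_range T -> (op_norm T <= 1%:E)%E -> {in @Lstar R _ M &, injective (Phi T)}),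
      (* (3) *)
      (isometric_iso T ->
         set_bij (@Lstar R _ M) (@Lstar R _ L) (Phi T) /\
         forall S : ((M -> R) -> R) -> ((L -> R) -> R),
           (forall f, FBL f -> FBL (S (T f)) /\ S (T f) = f) ->
           (forall g, FBL g -> FBL (S g) /\ T (S g) = g) ->
           (forall ys, @Lstar R _ M ys -> Phi S (Phi T ys) = ys) /\
           (forall xs, @Lstar R _ L xs -> Phi T (Phi S xs) = xs)) &
      (* (4) *)
      (forall (m : nat) (ys : 'I_m -> M -> R), (forall i, @Lstar R _ M (ys i)) ->
         (ereal_sup [set (\sum_(i < m) `|Phi T (ys i) x|)%:E | x in [set: L]]
          <= op_norm T * ereal_sup [set (\sum_(i < m) `|ys i y|)%:E | y in [set: M]])%E)].
Proof.
move=> hT; split.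
- exact: Phi_continuous.
- exact: Phi_injective.
- move=> isoT; split; first exact: Phi_set_bij.
  by move=> S ST TS; exact: Phi_inverse.
- exact: Phi_sup_sum_le.
Qed.
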